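(* Let $d\ge 2$. There exist constants $C>1$ and $c\in(0,1)$ depending only on $d$ such that the following holds for every finite field $\mathbb F_q$ of characteristic greater than two. Let $P=\{x\in\mathbb F_q^d: x_1^2+\cdots+x_{d-1}^2=x_d\}$, let $\pi:\mathbb F_q^d\to\mathbb F_q^{d-1}$ be $\pi(x_1,\ldots,x_d)=(x_1,\ldots,x_{d-1})$, and let $E\subset P$, $F\subset\mathbb F_q^d$. If $|E||\pi(F)|\ge Cq^d$, then $|\Pi(E,F)|\ge c\,q$.
   Context: $\mathbb F_q$ is a finite field with $q$ elements and characteristic greater than two. For $E,F\subset\mathbb F_q^d$, $\Pi(E,F)=\{x\cdot y: x\in E,\ y\in F\}$ with $x\cdot y=\sum_i x_iy_i$. *)

From Stdlib Require Import Reals.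
From mathcomp Require Import all_boot all_order all_algebra.
Set Implicit Arguments. Unset Strict Implicit. Unset Printing Implicit Defensive.
Import GRing.Theory.
Local Open Scope ring_scope.

(* Vectors of F_q^d are row vectors 'rV[F]_d, coordinates x 0 i, i : 'I_d
   (coordinate i corresponds to x_{i+1} of the paper). *)

Definition dotv (F : fieldType) (d : nat) (x y : 'rV[F]_d) : F :=
  \sum_(i < d) x 0 i * y 0 i.

(* P = { x : x_1^2 + ... + x_{d-1}^2 = x_d }.  The right-hand side
   sum over the single index i = d-1 is exactly x_d (for d >= 1). *)
Definition paraboloid (F : finFieldType) (d : nat) : {set 'rV[F]_d} :=
  [set x : 'rV[F]_d |
     \sum_(i < d | (i.+1 < d)%N) x 0 i ^+ 2
       == \sum_(i < d | (i : nat) == d.-1) x 0 i].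

Definition proj (F : fieldType) (d : nat) (x : 'rV[F]_d) : 'rV[F]_(d.-1) :=
  \row_(j < d.-1) x 0 (widen_ord (leq_pred d) j).

Definition proj_set (F : finFieldType) (d : nat) (G : {set 'rV[F]_d})
  : {set 'rV[F]_(d.-1)} := [set proj x | x in G].

Definition dot_set (F : finFieldType) (d : nat) (E G : {set 'rV[F]_d})
  : {set F} := [set dotv x y | x in E, y in G].

From Stdlib Require Import Reals Lra.
From mathcomp Require Import all_boot all_order all_algebra.
From mathcomp Require Import zify ring.
Set Implicit Arguments. Unset Strict Implicit. Unset Printing Implicit Defensive.
Import Order.TTheory GRing.Theory Num.Theory.
Local Open Scope ring_scope.

(* Let p = (v, t) range over the points of F^n x F and w = (a, b) over the
   "hyperplanes" t = v . a + b.  A second moment computation and Cauchy-Schwarz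
   give the incidence bound (q I(S, W) - |S||W|)^2 <= |S||W| q^(n+2).
   Write x = (x', x_d) for x in the paraboloid, so that x_d = x' . x'.
   If x_d <> 0, then x . y = t is the incidence of the point (x'/x_d, t/x_d)
   with the hyperplane (y', y_d), and x |-> x'/x_d is injective on the
   paraboloid because (x'/x_d) . (x'/x_d) = 1/x_d.  If x_d = 0, then
   x . y = x' . y' only depends on pi(y).  Taking S = E x Pi(E, G), all
   |E||pi(G)| pairs (x, y) yield incidences, hence
   |E||pi(G)| (q - |Pi(E, G)|)^2 <= 2 |Pi(E, G)| q^(d+1), and C = 8, c = 1/2
   work. *)

Lemma sqr_sum_le_card_sum_sqr (R : realDomainType) (I : finType) (P : pred I)
    (z : I -> R) :
  (\sum_(i | P i) z i) ^+ 2 <= #|P|%:R * \sum_(i | P i) z i ^+ 2.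
Proof.
set S1 := \sum_(i | P i) z i; set S2 := \sum_(i | P i) z i ^+ 2.
have lagrange : \sum_(i | P i) \sum_(j | P j) (z i - z j) ^+ 2
    = 2%:R * (#|P|%:R * S2 - S1 ^+ 2).
  transitivity (\sum_(i | P i) (#|P|%:R * z i ^+ 2 + S2 - 2%:R * z i * S1)).
    apply: eq_bigr => i _.
    rewrite (eq_bigr (fun j => z i ^+ 2 + z j ^+ 2 - 2%:R * z i * z j));
      last by move=> j _; ring.
    rewrite sumrB big_split /= sumr_const -mulr_sumr /S1 /S2; ring.
  rewrite sumrB big_split /= sumr_const -mulr_sumr -/S2 -mulr_suml -/S1.
  rewrite -mulr_sumr -/S1; ring.
have : 0 <= \sum_(i | P i) \sum_(j | P j) (z i - z j) ^+ 2.
  by apply: sumr_ge0 => i _; apply: sumr_ge0 => j _; apply: sqr_ge0.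
by rewrite lagrange pmulr_rge0 ?ltr0n // subr_ge0.
Qed.

Section DotProduct.
Variables (F : fieldType) (n : nat).
Implicit Types (x y : 'rV[F]_n) (k : F).

Lemma dotvDl x x' y : dotv (x + x') y = dotv x y + dotv x' y.
Proof. by rewrite /dotv -big_split; apply: eq_bigr => i _; rewrite mxE mulrDl. Qed.

Lemma dotvBr x y y' : dotv x (y - y') = dotv x y - dotv x y'.
Proof. by rewrite /dotv -sumrB; apply: eq_bigr => i _; rewrite !mxE mulrBr. Qed.

Lemma dotvZl k x y : dotv (k *: x) y = k * dotv x y.
Proof. by rewrite /dotv mulr_sumr; apply: eq_bigr => i _; rewrite mxE mulrA. Qed.

Lemma dotvZr k x y : dotv x (k *: y) = k * dotv x y.
Proof. by rewrite /dotv mulr_sumr; apply: eq_bigr => i _; rewrite mxE mulrCA. Qed.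

Lemma dotv_delta_mx (i : 'I_n) y : dotv (delta_mx 0 i) y = y 0 i.
Proof.
rewrite /dotv (bigD1 i) //= big1 => [|j /negbTE ji].
  by rewrite mxE !eqxx mul1r addr0.
by rewrite mxE ji andbF mul0r.
Qed.

End DotProduct.

Section Incidences.
Variables (F : finFieldType) (n : nat).
Local Notation q := #|F|.
Local Notation point := ('rV[F]_n * F)%type.

(* Level sets of a nonzero linear form are translates of each other. *)
Lemma card_dotv_level_le (a : 'rV[F]_n) c c' : a != 0 ->
  (#|[set v | dotv v a == c]| <= #|[set v | dotv v a == c']|)%N.
Proof.
move=> a_neq0.
have [i ai_neq0] : exists i, a 0 i != 0.
  apply/existsP; apply: contraR a_neq0 => /existsPn a0.
  by apply/eqP/matrixP => j k; rewrite ord1 mxE; apply/eqP; rewrite -[_ == _]negbK.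
pose shift (v : 'rV[F]_n) := v + ((c' - c) / a 0 i) *: delta_mx 0 i.
have shift_inj : injective shift by move=> v v' /addIr.
rewrite -(card_imset _ shift_inj); apply/subset_leq_card/subsetP => y /imsetP [v].
rewrite inE => /eqP vc ->; rewrite inE.
by rewrite dotvDl dotvZl dotv_delta_mx vc divfK // addrC subrK.
Qed.

Lemma card_dotv_level (a : 'rV[F]_n) c : a != 0 ->
  (q * #|[set v | dotv v a == c]| = q ^ n)%N.
Proof.
move=> a_neq0.
have partition : (\sum_(c' : F) #|[set v | dotv v a == c']| = q ^ n)%N.
  have -> : (q ^ n = #|{: 'rV[F]_n}|)%N by rewrite card_mx mul1n.
  rewrite -sum1_card (partition_big (fun v => dotv v a) predT) //=.
  by apply: eq_bigr => c' _; rewrite sum1dep_card; apply: eq_card => v; rewrite inE.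
rewrite -partition -sum_nat_const; apply: eq_bigr => c' _.
by apply/eqP; rewrite eqn_leq !card_dotv_level_le.
Qed.

Definition incident (p w : point) : bool := dotv p.1 w.1 + w.2 == p.2.

Definition deg (W : {set point}) (p : point) : nat := \sum_(w in W) incident p w.

Lemma sum_incident (w : point) (h : point -> nat) :
  (\sum_p incident p w * h p = \sum_(v : 'rV[F]_n) h (v, dotv v w.1 + w.2)%R)%N.
Proof.
rewrite (eq_bigr (fun p => incident (p.1, p.2) w * h (p.1, p.2)))%N => [|[] //].
rewrite -(pair_bigA _ (fun v t => incident (v, t) w * h (v, t)))%N /=.
apply: eq_bigr => v _; rewrite (bigD1 (dotv v w.1 + w.2)%R) //= /incident eqxx.
by rewrite mul1n big1 ?addn0 // => t /negbTE; rewrite eq_sym => ->.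
Qed.

Lemma card_incident_points (w : point) : (\sum_p incident p w = q ^ n)%N.
Proof.
rewrite (eq_bigr (fun p => incident p w * 1)%N) => [|p _]; last by rewrite muln1.
by rewrite sum_incident sum1_card card_mx mul1n.
Qed.

Lemma card_common_incident_points (w w' : point) : w != w' ->
  (q * \sum_p incident p w * incident p w' <= q ^ n)%N.
Proof.
case: w w' => a b [a' b'] /= ww'; rewrite sum_incident /incident /=.
have [eq_a|aa'] := eqVneq a a'.
  have bb' : b != b' by apply: contraNneq ww' => ->; rewrite eq_a.
  rewrite -eq_a big1 ?muln0 // => v _.
  by rewrite (inj_eq (addrI _)) eq_sym (negbTE bb').
rewrite -(@card_dotv_level (a' - a) (b - b')) ?subr_eq0 1?eq_sym //.
rewrite leq_mul2l -sum1_card [leqRHS]big_mkcond /=; apply/orP; right.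
apply: leq_sum => v _; rewrite inE dotvBr.
suff -> : (dotv v a' + b' == dotv v a + b) = (dotv v a' - dotv v a == b - b').
  by case: eqP.
by rewrite -[LHS]subr_eq0 -[RHS]subr_eq0; congr (_ == 0); ring.
Qed.

Lemma sum_deg (W : {set point}) : (\sum_p deg W p = #|W| * q ^ n)%N.
Proof.
rewrite exchange_big /= -sum_nat_const.
by apply: eq_bigr => w _; rewrite card_incident_points.
Qed.

Lemma sum_deg_sqr (W : {set point}) :
  (q * \sum_p deg W p ^ 2 <= #|W| * q ^ n.+1 + #|W| ^ 2 * q ^ n)%N.
Proof.
have -> : (\sum_p deg W p ^ 2
    = \sum_(w in W) \sum_(w' in W) \sum_p incident p w * incident p w')%N.
  symmetry; under eq_bigr => w _ do rewrite exchange_big.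
  rewrite exchange_big /=; apply: eq_bigr => p _.
  rewrite /deg expnS expn1 big_distrl /=.
  by apply: eq_bigr => w _; rewrite big_distrr.
rewrite big_distrr -[(#|W| ^ 2)%N]mulnn -mulnA -mulnDr -sum_nat_const /=.
apply: leq_sum => w wW; rewrite (bigD1 w) //= mulnDr leq_add //.
  rewrite (eq_bigr (fun p => nat_of_bool (incident p w))) => [|p _]; last by case: incident.
  by rewrite card_incident_points -expnS.
rewrite big_distrr -sum_nat_const [leqRHS](bigD1 w) //=.
apply: leq_trans (leq_addl _ _); apply: leq_sum => w' /andP [_ w'w].
by rewrite card_common_incident_points // eq_sym.
Qed.

Lemma sum_sqr_deg_deviation (W : {set point}) :
  \sum_p ((q * deg W p)%:R - #|W|%:R : int) ^+ 2 <= (#|W| * q ^ n.+2)%:R.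
Proof.
have -> : \sum_p ((q * deg W p)%:R - #|W|%:R : int) ^+ 2 =
    q%:R * (q%:R * (\sum_p deg W p ^ 2)%N%:R)
    - 2%:R * q%:R * #|W|%:R * (\sum_p deg W p)%N%:R + (q ^ n.+1 * #|W| ^ 2)%N%:R.
  rewrite (eq_bigr (fun p => q%:R * (q%:R * (deg W p ^ 2)%N%:R)
      - 2%:R * q%:R * #|W|%:R * (deg W p)%:R + (#|W| ^ 2)%N%:R : int)); last first.
    by move=> p _; rewrite natrX !natrM; ring.
  rewrite big_split sumrB /= sumr_const -!mulr_sumr -!natr_sum.
  by rewrite (@eq_card_prod _ _ xpredT) // card_mx mul1n -expnSr -mulrnA mulnC.
rewrite sum_deg; have := sum_deg_sqr W; rewrite !expnS expn0 muln1.
rewrite -(ler_nat int) !natrD !natrM => bound.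
have := ler_wpM2l (ler0n _ q) bound; rewrite -subr_ge0 => gap.
rewrite -subr_ge0; apply: (le_trans gap).
by rewrite le_eqVlt; apply/orP; left; apply/eqP; ring.
Qed.

Lemma incidence_bound (S W : {set point}) :
  ((q * \sum_(p in S) deg W p)%:R - (#|S| * #|W|)%:R : int) ^+ 2
    <= (#|S| * #|W| * q ^ n.+2)%:R.
Proof.
have -> : ((q * \sum_(p in S) deg W p)%:R - (#|S| * #|W|)%:R : int)
    = \sum_(p in S) ((q * deg W p)%:R - #|W|%:R).
  by rewrite sumrB sumr_const big_distrr /= natr_sum natrM mulr_natl.
apply: le_trans (sqr_sum_le_card_sum_sqr _ _) _.
rewrite -mulnA natrM ler_wpM2l //; apply: le_trans (sum_sqr_deg_deviation W).
rewrite [leRHS](bigID (mem S)) /= lerDl.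
by apply: sumr_ge0 => p _; apply: sqr_ge0.
Qed.

(* If the relation [dot x y = t] is realised by point-hyperplane incidences,
   all |X||Y| pairs are incidences, so a set T containing dot(X, Y) is large. *)
Lemma incidence_embedding_bound (A B : finType) (X : {set A}) (Y : {set B})
    (T : {set F}) (point_of : A * F -> point) (hyper_of : B -> point)
    (dot : A -> B -> F) :
  {in setX X T &, injective point_of} -> {in Y &, injective hyper_of} ->
  (forall x y, x \in X -> y \in Y -> dot x y \in T) ->
  (forall x t y, x \in X -> y \in Y ->
     incident (point_of (x, t)) (hyper_of y) = (dot x y == t)) ->
  (#|X| * #|Y| * (q - #|T|) ^ 2 <= #|T| * q ^ n.+2)%N.
Proof.
move=> point_inj hyper_inj dotT incidentE.
have := incidence_bound (point_of @: setX X T) (hyper_of @: Y).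
rewrite (card_in_imset point_inj) (card_in_imset hyper_inj) cardsX.
have -> : (\sum_(p in point_of @: setX X T) deg (hyper_of @: Y) p = #|X| * #|Y|)%N.
  rewrite big_imset //= (eq_bigl (fun p => (p.1 \in X) && (p.2 \in T))); last first.
    by case=> x t; rewrite in_setX.
  rewrite (eq_bigr (fun p => \sum_(y in Y) (dot p.1 y == p.2)))%N; last first.
    case=> x t /= /andP [xX _]; rewrite /deg big_imset //=.
    by apply: eq_bigr => y yY; rewrite incidentE.
  rewrite -(pair_big (mem X) (mem T) (fun x t => \sum_(y in Y) (dot x y == t)))%N /=.
  rewrite -sum_nat_const; apply: eq_bigr => x xX; rewrite exchange_big /= -sum1_card.
  apply: eq_bigr => y yY; rewrite (bigD1 (dot x y)) ?dotT //= eqxx big1 // => t.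
  by move=> /andP [_]; rewrite eq_sym => /negbTE ->.
rewrite [(_ * #|T| * _)%N]mulnAC; have := max_card T.
move: #|T| (#|X| * #|Y|)%N => t e t_le_q bound.
have [->|e_gt0] := posnP e; first by rewrite mul0n.
rewrite -(ler_nat int) -(@ler_pM2r _ e%:R) ?ltr0n //.
have -> : (e * (q - t) ^ 2)%:R * e%:R = ((q * e)%:R - (e * t)%:R : int) ^+ 2.
  by rewrite natrM natrX natrB // !natrM; ring.
by apply: le_trans bound _; rewrite -natrM ler_nat [leqRHS]mulnC mulnA.
Qed.

End Incidences.

Section Paraboloid.
Variables (F : finFieldType) (n : nat).
Local Notation q := #|F|.
Implicit Types (x y : 'rV[F]_n.+1) (E G : {set 'rV[F]_n.+1}).

Local Notation height x := (x 0 ord_max).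

Lemma dotv_proj x y : dotv x y = dotv (proj x) (proj y) + height x * height y.
Proof.
rewrite /dotv big_ord_recr /=; congr (_ + _); apply: eq_bigr => i _.
by rewrite !mxE; congr (x 0 _ * y 0 _); apply: val_inj.
Qed.

Lemma eq_proj_height x y : proj x = proj y -> height x = height y -> x = y.
Proof.
move=> /matrixP proj_xy height_xy; apply/matrixP => i j; rewrite ord1.
have [j_lt_n|j_ge_n] := ltnP j n.
  have := proj_xy 0 (Ordinal j_lt_n); rewrite !mxE.
  by have -> : widen_ord (leq_pred n.+1) (Ordinal j_lt_n) = j by apply: val_inj.
suff -> : j = ord_max by [].
by apply: val_inj; apply/eqP; rewrite eqn_leq j_ge_n -ltnS ltn_ord.
Qed.

Lemma paraboloid_height x : x \in paraboloid F n.+1 -> height x = dotv (proj x) (proj x).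
Proof.
rewrite inE => /eqP parab.
have -> : height x = \sum_(i < n.+1 | (i : nat) == n.+1.-1) x 0 i.
  by rewrite big_mkcond big_ord_recr /= eqxx big1 ?add0r // => i _; rewrite ltn_eqF.
rewrite -parab big_mkcond big_ord_recr /= ltnn addr0 /dotv; apply: eq_bigr => i _.
by rewrite ltnS ltn_ord /proj !mxE -expr2; congr (x 0 _ ^+ 2); apply: val_inj.
Qed.

Lemma paraboloid_normalized_norm x : x \in paraboloid F n.+1 -> height x != 0 ->
  dotv ((height x)^-1 *: proj x) ((height x)^-1 *: proj x) = (height x)^-1.
Proof.
move=> xP x_neq0; rewrite dotvZl dotvZr -paraboloid_height //.
by rewrite mulrA mulfVK.
Qed.

Lemma paraboloid_normalize_inj :
  {in [set x in paraboloid F n.+1 | height x != 0] &,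
    injective (fun x => (height x)^-1 *: proj x)}.
Proof.
move=> x x' /setIdP [xP x_neq0] /setIdP [x'P x'_neq0] eq_xx'.
have height_xx' : height x = height x'.
  apply: invr_inj.
  by rewrite -(paraboloid_normalized_norm xP x_neq0) eq_xx' paraboloid_normalized_norm.
apply: eq_proj_height => //.
by apply: (scalerI (invr_neq0 x_neq0)); rewrite eq_xx' height_xx'.
Qed.

Lemma mem_dot_set E G x y : x \in E -> y \in G -> dotv x y \in dot_set E G.
Proof. by move=> xE yG; apply/imset2P; exists x y. Qed.

Lemma dot_set_bound_height_neq0 E G : E \subset paraboloid F n.+1 ->
  (#|[set x in E | height x != 0%R]| * #|G| * (q - #|dot_set E G|) ^ 2
    <= #|dot_set E G| * q ^ n.+2)%N.
Proof.
move=> EP.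
apply: (@incidence_embedding_bound F n _ _ [set x in E | height x != 0] G (dot_set E G)
  (fun p => ((height p.1)^-1 *: proj p.1, p.2 / height p.1))
  (fun y => (proj y, height y)) (@dotv F n.+1)).
- have sub : [set x in E | height x != 0] \subset [set x in paraboloid F n.+1 | height x != 0].
    by apply/subsetP => x /setIdP [xE x_neq0]; apply/setIdP; split; first exact: (subsetP EP).
  move=> [x t] [x' t'] /setXP [xE _] /setXP [x'E _] [eq_x eq_t].
  have xx' := paraboloid_normalize_inj (subsetP sub x xE) (subsetP sub x' x'E) eq_x.
  move: xE eq_t; rewrite -xx' => /setIdP [_ x_neq0] /(mulIf (invr_neq0 x_neq0)).
  by move->.
- by move=> y y' _ _ [/eq_proj_height].
- by move=> x y /setIdP [xE _]; apply: mem_dot_set.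
- move=> x t y /setIdP [_ x_neq0] _.
  rewrite /incident /= dotv_proj dotvZl -(inj_eq (mulfI x_neq0)).
  by congr (_ == _); field.
Qed.

Lemma dot_set_bound_height_eq0 E G :
  (#|[set x in E | height x == 0%R]| * #|proj_set G| * (q - #|dot_set E G|) ^ 2
    <= #|dot_set E G| * q ^ n.+2)%N.
Proof.
apply: (@incidence_embedding_bound F n _ _ [set x in E | height x == 0] (proj_set G) (dot_set E G)
  (fun p => (proj p.1, p.2)) (fun u => (u, 0)) (fun x u => dotv (proj x) u)).
- move=> [x t] [x' t'] /setXP [/setIdP [_ /eqP x0] _] /setXP [/setIdP [_ /eqP x'0] _].
  by move=> [/eq_proj_height xx' ->]; rewrite xx' // x0 x'0.
- by move=> u u' _ _ [].
- move=> x _ /setIdP [xE /eqP x0] /imsetP [y yG ->].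
  by rewrite -[X in X \in _]addr0 -(mul0r (height y)) -x0 -dotv_proj mem_dot_set.
- by move=> x t u _ _; rewrite /incident addr0.
Qed.

Lemma paraboloid_dot_set_bound E G : E \subset paraboloid F n.+1 ->
  (#|E| * #|proj_set G| * (q - #|dot_set E G|) ^ 2
    <= 2 * #|dot_set E G| * q ^ n.+2)%N.
Proof.
move=> EP.
have split_E : #|E| = (#|[set x in E | height x != 0%R]| + #|[set x in E | height x == 0%R]|)%N.
  rewrite -(cardsID [set x : 'rV[F]_n.+1 | height x != 0] E).
  by congr (_ + _)%N; apply: eq_card => x; rewrite !inE // negbK andbC.
rewrite split_E -[(2 * _ * _)%N]mulnA mul2n -addnn !mulnDl.
rewrite leq_add ?dot_set_bound_height_eq0 //.
apply: leq_trans (dot_set_bound_height_neq0 G EP).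
by rewrite leq_mul2r leq_mul2l leq_imset_card !orbT.
Qed.

Lemma half_le_card_dot_set E G : E \subset paraboloid F n.+1 ->
  (8 * q ^ n.+1 <= #|E| * #|proj_set G| -> q <= 2 * #|dot_set E G|)%N.
Proof.
move=> /(paraboloid_dot_set_bound G); move: #|dot_set E G| => t.
move: (#|E| * #|proj_set G|)%N => e bound large.
have q_gt0 : (0 < q)%N by apply/card_gt0P; exists 0.
have Q_gt0 : (0 < q ^ n.+1)%N by rewrite expn_gt0 q_gt0.
have small_gap : (4 * (q - t) ^ 2 <= t * q)%N.
  rewrite -(leq_pmul2l (isT : (0 < 2)%N)) -(leq_pmul2r Q_gt0).
  have -> : (2 * (4 * (q - t) ^ 2) * q ^ n.+1 = 8 * q ^ n.+1 * (q - t) ^ 2)%N by ring.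
  have -> : (2 * (t * q) * q ^ n.+1 = 2 * t * q ^ n.+2)%N by rewrite !expnS; ring.
  by apply: leq_trans bound; rewrite leq_mul2r large orbT.
by nia.
Qed.

End Paraboloid.

Theorem lemma3p5 (d : nat) (hd : (2 <= d)%N) :
  exists C c : R,
    Rlt 1 C /\ Rlt 0 c /\ Rlt c 1 /\
    forall (F : finFieldType),
      (forall p : nat, p \in [pchar F] -> (2 < p)%N) ->
      forall E G : {set 'rV[F]_d},
        E \subset paraboloid F d ->
        Rle (Rmult C (INR (#|F| ^ d))) (INR (#|E| * #|proj_set G|)) ->
        Rle (Rmult c (INR #|F|)) (INR #|dot_set E G|).
Proof.
case: d hd => [//|n] _.
exists (INR 8), (Rinv (INR 2)); split; [|split; [|split]]; try (simpl; lra).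
move=> F _ E G EP large.
rewrite -mult_INR in large; move/INR_le/ssrnat.leP: large => large.
move/ssrnat.leP: (half_le_card_dot_set EP large) => /le_INR.
by rewrite mult_INR /=; lra.
Qed.
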